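(* Let $\Phi_s,\Phi_b$ be pleasant UCQs over $\Sigma$ and let $D$ be a structure over $\Sigma$ with $\Phi_s\odot D>\Phi_b\odot D$. Then $\mathtt{cq}(\Phi_s)\odot\text{Þ}(D)>\mathtt{cq}(\Phi_b)\odot\text{Þ}(D)$; in particular $\mathtt{cq}(\Phi_s)\not\le_\forall\mathtt{cq}(\Phi_b)$.
   Context: Structures are finite relational structures; constants are interpreted in the vertex set $\mathcal V(D)$. For a CQ $\phi$ and structure $D$, $\phi\odot D$ is the number of maps $h:var(\phi)\to\mathcal V(D)$ sending every atom of $\phi$ (with constants interpreted) to a fact of $D$; for a UCQ $\Phi=\bigvee_j\phi_j$ (pairwise variable-disjoint disjuncts) $\Phi\odot D:=\sum_j\phi_j\odot D$. $\Psi_s\le_\forall\Psi_b$ means $\Psi_s\odot D\le\Psi_b\odot D$ for all structures $D$. A query is pleasant if each atom contains at least one variable. Fix a relational signature $\Sigma$ (possibly with constants) and $\Sigma^+=\Sigma\cup\{V,R,\mathsf{mars},\mathsf{venus}\}$ with $V,R$ fresh binary relations and $\mathsf{mars},\mathsf{venus}$ fresh constants. Let $\mathtt{Good}$ be the variable-free CQ consisting of $V(\mathsf{venus},\mathsf{venus})$, $R(\mathsf{venus},\mathsf{venus})$ and all atoms $A(t_1,\dots,t_k)$ with $A\in\Sigma$, each $t_i$ either $\mathsf{venus}$ or a constant of $\Sigma$, and $\mathsf{venus}$ occurring among the $t_i$ at least once. $\mathtt{Planet}(x):=R(\mathsf{venus},x)\wedge R(x,\mathsf{venus})$. $x\rhd\phi:=\phi\wedge\mathtt{Planet}(x)\wedge\bigwedge_{y\in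 var(\phi)}V(x,y)$. $\mathtt{RClique}_J(x_1,\dots,x_J):=\bigwedge_{j}\mathtt{Planet}(x_j)\wedge\bigwedge_{j<j'}(R(x_j,x_{j'})\wedge R(x_{j'},x_j))$. For a pleasant UCQ $\Phi=\bigvee_{j=1}^J\phi_j$ over $\Sigma$, $\mathtt{cq}(\Phi):=\mathtt{RClique}_J(x_1,\dots,x_J)\wedge\bigwedge_{j=1}^J(x_j\rhd\phi_j)$ with fresh variables $x_1,\dots,x_J$. The marsification $\text{Þ}(D)$ of a structure $D$ over $\Sigma$ is the structure over $\Sigma^+$ whose elements are those of $D$ together with two new distinct elements interpreting $\mathsf{mars}$ and $\mathsf{venus}$, and whose facts are: all atoms of $\mathtt{Good}\wedge\mathtt{Planet}(\mathsf{mars})$, all facts of $D$, and $V(\mathsf{mars},a)$ for every $a\in\mathcal V(D)$. *)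

From Stdlib Require List.
From HB Require Import structures.
From mathcomp Require Import all_boot all_order.
Set Implicit Arguments. Unset Strict Implicit. Unset Printing Implicit Defensive.

Record signature := Sig {
  sRel : eqType;
  sCon : finType;
  sar  : sRel -> nat }.
Arguments sar : clear implicits.

Inductive term (X C : Type) := TVar of X | TCon of C.
Arguments TVar {X C} x.
Arguments TCon {X C} c.

Record atom (R X C : Type) := Atom { arel : R; aargs : seq (term X C) }.
Arguments Atom {R X C} arel aargs.

Definition cq (S : signature) (X : Type) := seq (atom (sRel S) X (sCon S)).
Definition ucq (S : signature) (X : Type) := seq (cq S X).

Definition term_var (X C : Type) (t : term X C) : option X :=
  if t is TVar x then Some x else None.

Definition qvars (S : signature) (X : eqType) (q : cq S X) : seq X :=
  undup (pmap (@term_var X (sCon S)) (flatten (map (@aargs _ _ _) q))).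

Definition cq_over (S : signature) (X : Type) (q : cq S X) : Prop :=
  forall a, List.In a q -> size (aargs a) = sar S (arel a).
Definition ucq_over (S : signature) (X : Type) (Phi : ucq S X) : Prop :=
  forall q, List.In q Phi -> cq_over q.

Definition pleasant_cq (S : signature) (X : Type) (q : cq S X) : Prop :=
  forall a, List.In a q -> exists2 t, List.In t (aargs a) & exists x, t = TVar x.
Definition pleasant_ucq (S : signature) (X : Type) (Phi : ucq S X) : Prop :=
  forall q, List.In q Phi -> pleasant_cq q.

Record structure (S : signature) := Struct {
  elt  : finType;
  cint : sCon S -> elt;
  fact : sRel S -> seq elt -> bool }.
Arguments elt {S} s.
Arguments cint {S} s c.
Arguments fact {S} s A l.
Arguments Struct {S} elt cint fact.

Definition wf_structure (S : signature) (D : structure S) : Prop :=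
  forall A s, fact D A s -> size s = sar S A.

Section Count.
Variables (S : signature) (X : choiceType) (D : structure S).

Definition tval (vs : seq X) (h : {ffun seq_sub vs -> elt D})
  (t : term X (sCon S)) : option (elt D) :=
  match t with
  | TVar x => omap h (insub x)
  | TCon c => Some (cint D c)
  end.

Definition sat_atom (vs : seq X) (h : {ffun seq_sub vs -> elt D})
  (a : atom (sRel S) X (sCon S)) : bool :=
  let ev := map (tval h) (aargs a) in
  all (fun o => o != None) ev && fact D (arel a) (pmap id ev).

Definition cq_count (q : cq S X) : nat :=
  #|[pred h : {ffun seq_sub (qvars q) -> elt D} | all (sat_atom h) q]|.

Definition ucq_count (Phi : ucq S X) : nat := \sum_(q <- Phi) cq_count q.
End Count.

Definition le_forall (S : signature) (X1 X2 : choiceType)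
  (q1 : cq S X1) (q2 : cq S X2) : Prop :=
  forall D : structure S, wf_structure D -> cq_count D q1 <= cq_count D q2.

(* relations: inl A for A in Sigma, inr false = V, inr true = R (both binary);
   constants: inl c for c in Sigma, inr false = mars, inr true = venus. *)
Definition sigplus (S : signature) : signature :=
  @Sig (sRel S + bool)%type (sCon S + bool)%type
    (fun r => match r with inl A => sar S A | inr _ => 2 end).

Definition relV {R : Type} : (R + bool)%type := inr false.
Definition relR {R : Type} : (R + bool)%type := inr true.
Definition cMars {C : Type} : (C + bool)%type := inr false.
Definition cVenus {C : Type} : (C + bool)%type := inr true.

Section Cq.
Variables (S : signature) (X : choiceType).
Notation Y := (nat * option X)%type.
(* variables of cq(Phi): (j, None) is the fresh x_j, (j, Some y) is variable y
   of the j-th disjunct (renaming the disjuncts apart). *)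
Definition xv (j : nat) : term Y (sCon S + bool) := TVar (j, None).
Definition tVenus : term Y (sCon S + bool) := TCon cVenus.

Definition lift_term (j : nat) (t : term X (sCon S)) : term Y (sCon S + bool) :=
  match t with TVar y => TVar (j, Some y) | TCon c => TCon (inl c) end.
Definition lift_cq (j : nat) (q : cq S X) : cq (sigplus S) Y :=
  [seq Atom (inl (arel a)) (map (lift_term j) (aargs a)) | a <- q].

Definition Planet (x : term Y (sCon S + bool)) : cq (sigplus S) Y :=
  [:: Atom relR [:: tVenus; x]; Atom relR [:: x; tVenus]].

Definition rhd (x : term Y (sCon S + bool)) (q : cq (sigplus S) Y) : cq (sigplus S) Y :=
  q ++ Planet x ++ [seq Atom relV [:: x; TVar y] | y <- qvars q].

Definition RClique (J : nat) : cq (sigplus S) Y :=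
  flatten [seq Planet (xv j) | j <- iota 0 J] ++
  flatten [seq [:: Atom relR [:: xv p.1; xv p.2]; Atom relR [:: xv p.2; xv p.1]]
          | p <- [seq (j, j') | j <- iota 0 J, j' <- iota 0 J] & p.1 < p.2].

Definition cqU (Phi : ucq S X) : cq (sigplus S) Y :=
  RClique (size Phi) ++
  flatten [seq rhd (xv j) (lift_cq j (nth [::] Phi j)) | j <- iota 0 (size Phi)].
End Cq.

Section Mars.
Variables (S : signature) (D : structure S).
Notation E := (elt D + bool)%type.
Definition eMars : E := inr false.
Definition eVenus : E := inr true.
Definition unl (e : E) : option (elt D) := if e is inl a then Some a else None.

(* interpretation of the atoms of Good (relations of Sigma): A(e_1..e_k),
   k = ar A, each e_i is venus or the value of a constant of Sigma,
   venus occurs at least once *)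
Definition good_sigma_fact (A : sRel S) (s : seq E) : bool :=
  [&& size s == sar S A, eVenus \in s &
      all (fun e => (e == eVenus) ||
             (if e is inl a then [exists c, cint D c == a] else false)) s].

Definition mars_fact (r : (sRel S + bool)%type) (s : seq E) : bool :=
  match r with
  | inl A => good_sigma_fact A s                          (* Good *)
             || (all (fun e => unl e != None) s && fact D A (pmap unl s)) (* D *)
  | inr false => (* V *)
      (s == [:: eVenus; eVenus])                          (* Good *)
      || (if s is [:: x; y] then (x == eMars) && (unl y != None) else false)
                                                          (* V(mars,a) *)
  | inr true => (* R *)
      (s == [:: eVenus; eVenus])                          (* Good *)
      || (s == [:: eVenus; eMars]) || (s == [:: eMars; eVenus]) (* Planet(mars) *)
  end.

Definition marsify : structure (sigplus S) :=
  @Struct (sigplus S) E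
    (fun c => match c with inl c => inl (cint D c) | inr b => inr b end)
    mars_fact.
End Mars.

From Pilot Require Import Defs.
From mathcomp Require Import all_boot all_order.
Set Implicit Arguments. Unset Strict Implicit. Unset Printing Implicit Defensive.

(* Every homomorphism from cq(Phi) to the marsification sends each x_j to venus
   or mars (Planet), and at most one of them to mars, as R(mars, mars) is not a
   fact.  If no x_j goes to mars, the atoms V(x_j, y) force every variable to
   venus; this all-venus map is a homomorphism because pleasantness puts venus
   into every atom, making it an atom of Good.  If x_j goes to mars, the other
   disjuncts again collapse onto venus, while V(mars, y) forces the variables of
   phi_j into D, where the atoms of phi_j must map to facts of D; conversely each
   homomorphism of phi_j into D arises in this way.  Hence
   cq(Phi) (.) Mars(D) = 1 + Phi (.) D, and the strict inequality transfers. *)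

Lemma In_mem (T : eqType) (x : T) s : List.In x s -> x \in s.
Proof. by elim: s => //= y s IH [-> | /IH xs]; rewrite inE ?eqxx ?xs ?orbT. Qed.

Lemma In_nth (T : Type) (s : seq T) x0 k : k < size s -> List.In (nth x0 s k) s.
Proof. by elim: s k => //= x s IH [|k] /= ks; [left | right; apply: IH]. Qed.

Lemma card_sum_pred (T : finType) (P : pred T) : #|P| = \sum_(x : T) P x.
Proof.
rewrite -sum1_card [LHS]big_mkcond; apply: eq_bigr => x _.
by rewrite unfold_in; case: (P x).
Qed.

Lemma all_flatten (T : Type) (p : pred T) (s : seq (seq T)) :
  all p (flatten s) = all (all p) s.
Proof. by elim: s => //= x s IH; rewrite all_cat IH. Qed.

Section Valuations.
Variables (S : signature) (Z : choiceType) (D : structure S).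
Implicit Types (f : Z -> elt D) (a : atom (sRel S) Z (sCon S)) (q : cq S Z).

Definition eval_term f (t : term Z (sCon S)) : elt D :=
  match t with TVar x => f x | TCon c => cint D c end.

Definition holds f a : bool := fact D (arel a) (map (eval_term f) (aargs a)).

Definition atom_vars a : seq Z := pmap (@term_var Z (sCon S)) (aargs a).

Lemma mem_qvars_cons a q y :
  (y \in qvars (a :: q)) = (y \in atom_vars a) || (y \in qvars q).
Proof. by rewrite /qvars !mem_undup /= pmap_cat mem_cat. Qed.

Lemma mem_qvars_cat q1 q2 y :
  (y \in qvars (q1 ++ q2)) = (y \in qvars q1) || (y \in qvars q2).
Proof. by rewrite /qvars !mem_undup map_cat flatten_cat pmap_cat mem_cat. Qed.

Lemma mem_qvars_flatten (T : Type) (F : T -> cq S Z) s y :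
  (y \in qvars (flatten (map F s))) = has (fun i => y \in qvars (F i)) s.
Proof. by elim: s => //= i s IH; rewrite mem_qvars_cat IH. Qed.

Lemma mem_qvars_map (T : Type) (F : T -> atom (sRel S) Z (sCon S)) s y :
  (y \in qvars (map F s)) = has (fun i => y \in atom_vars (F i)) s.
Proof. by elim: s => //= i s IH; rewrite mem_qvars_cons IH. Qed.

Lemma sat_atomE (vs : seq Z) (h : {ffun seq_sub vs -> elt D}) f a :
  (forall u, h u = f (val u)) -> {subset atom_vars a <= vs} ->
  sat_atom h a = holds f a.
Proof.
rewrite /sat_atom /holds /atom_vars => hf.
have tvalE ts : {subset pmap (@term_var _ _) ts <= vs} ->
    map (Defs.tval h) ts = map (Some \o eval_term f) ts.
  elim: ts => [|[x|c] ts IH] //= tsv; last by rewrite IH.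
  rewrite IH => [|z zts]; last by apply: tsv; rewrite inE zts orbT.
  case: insubP => [u _ <-|/negP[]]; first by rewrite /= hf.
  by apply: tsv; apply: mem_head.
by move=> /tvalE ->; rewrite all_mapT // map_comp map_pK.
Qed.

Lemma all_sat_atomE q (h : {ffun seq_sub (qvars q) -> elt D}) f :
  (forall u, h u = f (val u)) -> all (sat_atom h) q = all (holds f) q.
Proof.
move=> hf; suff: forall q', {subset qvars q' <= qvars q} ->
  all (sat_atom h) q' = all (holds f) q' by apply.
elim=> //= a q' IH q'q; rewrite (sat_atomE hf) ?IH // => y yq; apply: q'q;
  by rewrite mem_qvars_cons yq ?orbT.
Qed.

End Valuations.

Section CqVars.
Variables (S : signature) (X : choiceType).
Notation Y := (nat * option X)%type.
Implicit Types (q : cq S X) (Phi : ucq S X) (y : Y).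

Definition lift_atom k (a : atom (sRel S) X (sCon S)) :
  atom (sRel (sigplus S)) Y (sCon (sigplus S)) :=
  Atom (inl (arel a)) (map (lift_term k) (aargs a)).

Lemma qvars_lift k q : qvars (lift_cq k q) = [seq (k, Some x) | x <- qvars q].
Proof.
rewrite /qvars -undup_map_inj => [|x x' [] //]; congr undup.
elim: q => //= a q IH; rewrite !pmap_cat map_cat IH; congr (_ ++ _).
by elim: (aargs a) => //= -[x|c] ts IHts /=; rewrite IHts.
Qed.

Lemma mem_qvars_Planet k y : (y \in qvars (Planet (xv S X k))) = (y == (k, None)).
Proof. by rewrite !mem_qvars_cons /atom_vars /= !inE orbF orbb. Qed.

Lemma mem_qvars_cqU Phi y :
  (y \in qvars (cqU Phi)) =
  (y.1 < size Phi) && (if y.2 is Some x then x \in qvars (nth [::] Phi y.1) else true).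
Proof.
rewrite /cqU /RClique !mem_qvars_cat !mem_qvars_flatten -orbA.
apply/idP/idP => [|/andP[]]; last first.
  case: y => k [x|] /= kJ => [xq|_]; apply/or3P.
  - apply: Or33; apply/hasP; exists k; first by rewrite mem_iota.
    by rewrite /rhd !mem_qvars_cat qvars_lift mem_map ?xq // => ? ? [].
  - by apply: Or31; apply/hasP; exists k; rewrite ?mem_iota ?mem_qvars_Planet.
case/or3P=> /hasP[i]; rewrite ?mem_iota ?add0n.
- by rewrite mem_qvars_Planet => /andP[_ iJ] /eqP -> /=; rewrite iJ.
- rewrite mem_filter => /andP[ii' /allpairsP[[k k'] [/= + + eqi]]].
  rewrite {}eqi /= in ii' * => /[!(mem_iota, add0n)] /andP[_ kJ] /andP[_ k'J].
  rewrite !mem_qvars_cons /atom_vars /= !inE orbF.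
  by case/or3P=> [/orP[]|//|//] /eqP-> /=; rewrite ?kJ ?k'J.
- rewrite /rhd !mem_qvars_cat qvars_lift mem_qvars_Planet mem_qvars_map.
  move=> /andP[_ iJ] /or3P[/mapP[x xq ->]|/eqP->|/hasP[z]] /=; rewrite ?iJ //.
  move=> /mapP[x xq ->]; rewrite /atom_vars /= !inE.
  by case/orP=> /eqP-> /=; rewrite iJ.
Qed.

End CqVars.

Lemma wf_marsify (S : signature) (D : structure S) :
  wf_structure D -> wf_structure (marsify D).
Proof.
move=> wfD [A|[]] s /=.
- case/orP => [/and3P[/eqP-> _ _] // | /andP[sD /wfD <-]].
  by elim: s sD => //= -[a|b] s IH /andP[// _ /IH ->].
- by move/orP => [/orP[/eqP-> | /eqP->] | /eqP->].
- by case/orP => [/eqP-> //|]; case: s => [|x [|y [|z s]]] //=; rewrite andbF.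
Qed.

Section Marsification.
Variables (S : signature) (X : choiceType) (D : structure S).
Notation Y := (nat * option X)%type.
Notation E := (elt D + bool)%type.
Notation holdsM := (@holds (sigplus S) _ (marsify D)).
Notation xv := (xv S X).
Notation ven := (eVenus D).
Notation mar := (eMars D).
Implicit Types (f : Y -> E) (a : atom (sRel S) X (sCon S)) (q : cq S X).

Definition is_planet (e : E) : bool := (e == ven) || (e == mar).

Lemma all_holds_Planet f k :
  all (holdsM f) (Planet (xv k)) = is_planet (f (k, None)).
Proof. by rewrite /= /holds /=; case: (f (k, None)) => [a|[]]. Qed.

Lemma holds_R_planets f k k' :
  is_planet (f (k, None)) -> is_planet (f (k', None)) ->
  holdsM f (Atom relR [:: xv k; xv k']) =
  ~~ ((f (k, None) == mar) && (f (k', None) == mar)).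
Proof.
rewrite /is_planet /holds /=.
by case: (f (k, None)) => [a|[]]; case: (f (k', None)) => [b|[]].
Qed.

Lemma holds_V_venus f k y : f (k, None) = ven ->
  holdsM f (Atom relV [:: xv k; TVar y]) = (f y == ven).
Proof. by rewrite /holds /= => ->; case: (f y) => [a|[]]. Qed.

Lemma holds_V_mars f k y : f (k, None) = mar ->
  holdsM f (Atom relV [:: xv k; TVar y]) = (unl (f y) != None).
Proof. by rewrite /holds /= => ->; case: (f y) => [a|[]]. Qed.

(* Pleasantness is what puts venus into the atom, making it an atom of Good. *)
Lemma holds_lift_venus f k a :
  size (aargs a) = sar S (arel a) ->
  (exists2 t, List.In t (aargs a) & exists x, t = TVar x) ->
  (forall x, f (k, Some x) = ven) -> holdsM f (lift_atom k a).
Proof.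
move=> ar [t ta [x tx]] fven; subst t.
rewrite /holds /= /good_sigma_fact !size_map ar eqxx /=; apply/orP; left.
apply/andP; split.
  by apply: In_mem; rewrite -map_comp -(fven x); apply: (List.in_map _ _ _ ta).
rewrite all_map; elim: (aargs a) {ar ta} => //= -[y|c] ts -> /=.
  by rewrite fven eqxx.
by rewrite andbT; apply/existsP; exists c.
Qed.

Lemma all_holds_lift_venus f k q : cq_over q -> pleasant_cq q ->
  (forall x, f (k, Some x) = ven) -> all (holdsM f) (lift_cq k q).
Proof.
move=> ar pl fven; elim: q ar pl => //= a q IH ar pl; apply/andP; split.
- by apply: holds_lift_venus => //; [apply: ar | apply: pl]; left.
- by apply: IH => b bq; [apply: ar | apply: pl]; right.
Qed.

Lemma holds_lift_inl f k (vs : seq X) (g : {ffun seq_sub vs -> elt D}) a :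
  (forall u, f (k, Some (val u)) = inl (g u)) -> {subset atom_vars a <= vs} ->
  holdsM f (lift_atom k a) = sat_atom g a.
Proof.
rewrite /holds /sat_atom /atom_vars /= => fg.
have evalE ts : {subset pmap (@term_var _ _) ts <= vs} -> exists l,
    map (Defs.tval g) ts = map Some l /\
    map (eval_term (D := marsify D) f) (map (lift_term k) ts) = map inl l.
  elim: ts => [|[x|c] ts IH] /= tsv; first by exists [::].
  - have [|l [-> ->]] := IH; first by move=> z zts; apply: tsv; rewrite inE zts orbT.
    case: insubP => [u _ <-|/negP[]]; last by apply: tsv; apply: mem_head.
    by exists (g u :: l); rewrite /= fg.
  - by have [l [-> ->]] := IH tsv; exists (cint D c :: l).
move=> /evalE[l [-> ->]]; rewrite all_mapT // !map_pK //.
have -> : good_sigma_fact (arel a) (map inl l) = false.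
  by apply/negbTE/negP => /and3P[_ /mapP[]].
by rewrite all_mapT.
Qed.

Lemma all_holds_lift_inl f k q (g : {ffun seq_sub (qvars q) -> elt D}) :
  (forall u, f (k, Some (val u)) = inl (g u)) ->
  all (holdsM f) (lift_cq k q) = all (sat_atom g) q.
Proof.
move=> fg; suff: forall q', {subset qvars q' <= qvars q} ->
  all (holdsM f) (lift_cq k q') = all (sat_atom g) q' by apply.
elim=> //= a q' IH q'q; rewrite -(holds_lift_inl fg) ?IH // => y yq; apply: q'q;
  by rewrite mem_qvars_cons yq ?orbT.
Qed.

End Marsification.

Section Counting.
Variables (S : signature) (X : choiceType) (D : structure S) (Phi : ucq S X).
Hypotheses (Phi_over : ucq_over Phi) (Phi_pleasant : pleasant_ucq Phi).
Notation Y := (nat * option X)%type.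
Notation E := (elt D + bool)%type.
Notation M := (marsify D).
Notation holdsM := (@holds (sigplus S) _ M).
Notation xv := (xv S X).
Notation ven := (eVenus D).
Notation mar := (eMars D).
Notation J := (size Phi).
Notation phi k := (nth [::] Phi k).
Notation U := (cqU Phi).
Implicit Types (f : Y -> E).

Lemma all_holds_cqU f : all (holdsM f) U <->
  [/\ forall k, k < J -> is_planet (f (k, None)),
      forall k k', k < k' < J -> ~~ ((f (k, None) == mar) && (f (k', None) == mar)),
      forall k, k < J -> all (holdsM f) (lift_cq k (phi k)) &
      forall k y, k < J -> y \in qvars (lift_cq k (phi k)) ->
        holdsM f (Atom relV [:: xv k; TVar y])].
Proof.
rewrite /cqU /RClique !all_cat -andbA !all_flatten !all_map all_filter.
have iotaP k : (k \in iota 0 J) = (k < J) by rewrite mem_iota.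
split=> [/and3P[/allP planets /all_allpairsP pairs /allP disj] | [planets pairs disj V]].
  have planetsJ k : k < J -> is_planet (f (k, None)).
    by move=> kJ; rewrite -all_holds_Planet; apply: planets; rewrite iotaP.
  have disjJ k : k < J -> all (holdsM f) (rhd (xv k) (lift_cq k (phi k))).
    by rewrite -iotaP => /disj.
  split=> // [k k' /andP[kk' k'J] | k /disjJ | k y /disjJ].
  - have kJ := ltn_trans kk' k'J.
    have := pairs k k'; rewrite !iotaP kJ k'J => /(_ isT isT) /implyP/(_ kk').
    move=> /andP[+ _].
    by rewrite [in X in X -> _]holds_R_planets ?planetsJ.
  - by rewrite /rhd !all_cat => /and3P[].
  - rewrite /rhd !all_cat [all _ (map _ (qvars _))]all_map.
    by move=> /and3P[_ _ /allP Vs] /Vs.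
apply/and3P; split.
- apply/allP => k; rewrite iotaP => kJ.
  by have := planets k kJ; rewrite -all_holds_Planet.
- apply/all_allpairsP => k k'; rewrite !iotaP => kJ k'J; apply/implyP => kk'.
  change (holdsM f (Atom relR [:: xv k; xv k']) &&
          (holdsM f (Atom relR [:: xv k'; xv k]) && true)).
  rewrite !holds_R_planets ?planets // andbT (andbC (f (k', None) == mar)) andbb.
  by apply: pairs; rewrite kk'.
- apply/allP => k; rewrite iotaP => kJ /=.
  rewrite /rhd !all_cat all_holds_Planet planets // disj //= [all _ (map _ _)]all_map.
  by apply/allP => y; apply: V.
Qed.
Notation V := (qvars U).
Notation H := {ffun seq_sub V -> elt M}.

(* The value venus outside var(cq(Phi)) is junk. *)
Definition extend (h : H) (y : Y) : E := odflt ven (omap h (insub y)).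

Lemma extend_val (h : H) u : extend h (val u) = h u.
Proof. by rewrite /extend valK. Qed.

Lemma sat_cqUE (h : H) : all (sat_atom h) U = all (holdsM (extend h)) U.
Proof. by apply: all_sat_atomE => u; rewrite extend_val. Qed.

Definition hom_venus : H := [ffun=> ven].

Lemma extend_hom_venus y : extend hom_venus y = ven.
Proof. by rewrite /extend; case: insub => [u|] //=; rewrite ffunE. Qed.

Lemma sat_hom_venus : all (sat_atom hom_venus) U.
Proof.
rewrite (all_sat_atomE (D := M) (f := fun=> ven)) => [|u]; last by rewrite ffunE.
apply/all_holds_cqU; split=> // k kJ.
by apply: all_holds_lift_venus => //; [apply: Phi_over | apply: Phi_pleasant];
  apply: In_nth.
Qed.

Section MarsAt.
Variable j : nat.
Hypothesis jJ : j < J.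
Notation W := (qvars (phi j)).
Implicit Type g : {ffun seq_sub W -> elt D}.

Definition mars_valuation g (y : Y) : E :=
  if y.1 != j then ven else
  if y.2 is Some x then oapp (fun u => inl (g u)) ven (insub x) else mar.

Lemma holds_mars_valuation g :
  all (sat_atom g) (phi j) -> all (holdsM (mars_valuation g)) U.
Proof.
move=> gsat; have marsE k : (mars_valuation g (k, None) == mar) = (k == j).
  by rewrite /mars_valuation /=; case: (eqVneq k j).
apply/all_holds_cqU; split=> [k _ | k k' /andP[kk' _] | k kJ | k y kJ].
- by rewrite /is_planet /mars_valuation; case: (k != j).
- rewrite !marsE; apply/andP => -[/eqP ekj /eqP ek'j].
  by rewrite ekj ek'j ltnn in kk'.
- have [->|kj] := eqVneq k j.
    rewrite (all_holds_lift_inl (g := g)) // => u.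
    by rewrite /mars_valuation /= eqxx /= valK.
  by apply: all_holds_lift_venus => [||x]; rewrite /mars_valuation /= ?kj //;
    [apply: Phi_over | apply: Phi_pleasant]; apply: In_nth.
- rewrite qvars_lift => /mapP[x xk ->]; have [ekj|kj] := eqVneq k j.
    rewrite (holds_V_mars (k := k)) /mars_valuation /= ekj ?eqxx //=.
    by case: insubP => [u|/negP[]] //; rewrite -ekj.
  by rewrite (holds_V_venus (k := k)) /mars_valuation /= kj.
Qed.

Definition mars_hom g : H := [ffun u => mars_valuation g (val u)].

Lemma extend_mars_hom g y : y \in V -> extend (mars_hom g) y = mars_valuation g y.
Proof. by rewrite /extend => yV; case: insubP => [u _ <-|/negP[]] //=; rewrite ffunE. Qed.

Lemma sat_mars_hom g : all (sat_atom g) (phi j) -> all (sat_atom (mars_hom g)) U.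
Proof.
move=> gsat; rewrite (all_sat_atomE (D := M) (f := mars_valuation g)) => [|u].
  exact: holds_mars_valuation.
by rewrite ffunE.
Qed.

Lemma extend_mars_hom_x g : extend (mars_hom g) (j, None) = mar.
Proof. by rewrite extend_mars_hom ?mem_qvars_cqU /= ?jJ // /mars_valuation /= eqxx. Qed.

Lemma extend_mars_hom_var g (u : seq_sub W) :
  extend (mars_hom g) (j, Some (val u)) = inl (g u).
Proof.
rewrite extend_mars_hom ?mem_qvars_cqU /= ?jJ ?(valP u) //.
by rewrite /mars_valuation /= eqxx /= valK.
Qed.

Lemma mars_hom_inj : injective mars_hom.
Proof.
move=> g1 g2 eq12; apply/ffunP => u.
by have := extend_mars_hom_var g1 u; rewrite eq12 extend_mars_hom_var => -[].
Qed.

(* R(mars, mars) is not a fact, so mars is the image of at most one x_k. *)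
Lemma venus_off_mars f k : all (holdsM f) U -> f (j, None) = mar ->
  k < J -> k != j -> f (k, None) = ven.
Proof.
case/all_holds_cqU => planets pairs _ _ fj kJ kj.
have /orP[/eqP // | /eqP fk] := planets k kJ.
case: (ltngtP k j) => [kj' | jk | ekj].
- by have := pairs k j; rewrite kj' jJ fk fj eqxx => /(_ isT).
- by have := pairs j k; rewrite jk kJ fk fj eqxx => /(_ isT).
- by rewrite ekj eqxx in kj.
Qed.

Lemma mars_homP (h : H) : all (sat_atom h) U -> extend h (j, None) = mar ->
  exists2 g, all (sat_atom g) (phi j) & h = mars_hom g.
Proof.
move=> hU hj; rewrite sat_cqUE in hU; have [_ _ disj Vs] := (all_holds_cqU _).1 hU.
have inD (u : seq_sub W) : {a | extend h (j, Some (val u)) = inl a}.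
  have := Vs j (j, Some (val u)) jJ.
  rewrite qvars_lift (holds_V_mars _ hj) => /(_ (map_f _ (valP u))).
  by case: (extend h _) => [a _|//]; exists a.
pose g := [ffun u => sval (inD u)].
have hg u : extend h (j, Some (val u)) = inl (g u).
  by rewrite ffunE; exact: (svalP (inD u)).
exists g; first by rewrite -(all_holds_lift_inl hg); apply: disj.
apply/ffunP => u; rewrite ffunE -extend_val.
have := valP u; rewrite mem_qvars_cqU /mars_valuation.
case: (val u) => k [x|] /= /andP[kJ xk]; have [ekj|kj] := eqVneq k j => //=.
- by rewrite ekj in xk *; case: insubP => [u' _ <-|/negP[]].
- have := Vs k (k, Some x) kJ.
  rewrite qvars_lift (holds_V_venus _ (venus_off_mars hU hj kJ kj)).
  by move=> /(_ (map_f _ xk)) /eqP.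
- by rewrite ekj.
- exact: venus_off_mars.
Qed.

Lemma card_mars_at :
  #|[pred h : H | all (sat_atom h) U && (extend h (j, None) == mar)]| =
  cq_count D (phi j).
Proof.
rewrite /cq_count -(card_in_imset (f := mars_hom)) => [|g1 g2 _ _]; last first.
  exact: mars_hom_inj.
apply: eq_card => h; rewrite !inE; apply/andP/imsetP => [[hU /eqP hj] | [g gsat ->]].
- by have [g gsat ->] := mars_homP hU hj; exists g.
- by rewrite sat_mars_hom ?extend_mars_hom_x.
Qed.

End MarsAt.

Lemma sat_no_mars (h : H) : all (sat_atom h) U ->
  (forall k, k < J -> extend h (k, None) != mar) -> h = hom_venus.
Proof.
rewrite sat_cqUE => /all_holds_cqU[planets _ _ Vs] nomars.
have hven k : k < J -> extend h (k, None) = ven.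
  move=> kJ; move: (planets k kJ) (nomars k kJ).
  by case/orP => /eqP -> //; rewrite eqxx.
apply/ffunP => u; rewrite ffunE -extend_val.
have := valP u; rewrite mem_qvars_cqU.
case: (val u) => k [x|] /= /andP[kJ xk]; last exact: hven.
have := Vs k (k, Some x) kJ; rewrite qvars_lift (holds_V_venus _ (hven k kJ)).
by move=> /(_ (map_f _ xk)) /eqP.
Qed.

Lemma sat_cqU_indicator (h : H) : (all (sat_atom h) U : nat) =
  (h == hom_venus) +
  \sum_(0 <= k < J) (all (sat_atom h) U && (extend h (k, None) == mar)).
Proof.
have [hU|hU] := boolP (all (sat_atom h) U); last first.
  by rewrite big1 // addn0; case: eqP hU => // ->; rewrite sat_hom_venus.
have [/hasP[j] | /hasPn nomars] :=
  boolP (has (fun k => extend h (k, None) == mar) (iota 0 J)).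
- rewrite mem_iota => /andP[_ jJ] hj.
  have -> : (h == hom_venus) = false.
    by apply/eqP => eh; rewrite eh extend_hom_venus in hj.
  rewrite (bigD1_seq j) ?mem_index_iota ?iota_uniq //= hj big1_seq //.
  move=> k /andP[kj]; rewrite mem_index_iota => /andP[_ kJ].
  by rewrite (venus_off_mars jJ (k := k)) ?andbF // -?sat_cqUE // (eqP hj).
- rewrite big1_seq ?addn0 => [|k]; last first.
    rewrite mem_index_iota => /andP[_ kJ].
    by rewrite (negbTE (nomars k _)) ?andbF ?mem_iota.
  by rewrite (sat_no_mars hU) ?eqxx // => k kJ; apply: nomars; rewrite mem_iota.
Qed.

Lemma count_cqU : cq_count M U = 1 + ucq_count D Phi.
Proof.
rewrite /cq_count card_sum_pred (eq_bigr _ (fun h _ => sat_cqU_indicator h)).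
rewrite big_split /=.
congr (_ + _); first by rewrite (bigD1 hom_venus) //= eqxx big1 // => h /negbTE ->.
rewrite exchange_big /ucq_count (big_nth [::]) /=; apply: eq_big_nat => k /andP[_ kJ].
by rewrite -card_sum_pred card_mars_at.
Qed.

End Counting.

Theorem mainTheorem11 (S : signature) (Xs Xb : choiceType)
  (Phis : ucq S Xs) (Phib : ucq S Xb) (D : structure S) :
  ucq_over Phis -> pleasant_ucq Phis ->
  ucq_over Phib -> pleasant_ucq Phib ->
  wf_structure D ->
  ucq_count D Phib < ucq_count D Phis ->
  cq_count (marsify D) (cqU Phib) < cq_count (marsify D) (cqU Phis) /\
  ~ le_forall (cqU Phis) (cqU Phib).
Proof.
move=> Phis_over Phis_pleasant Phib_over Phib_pleasant wfD lt_b_s.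
have lt_marsify : cq_count (marsify D) (cqU Phib) < cq_count (marsify D) (cqU Phis).
  by rewrite !count_cqU // ltn_add2l.
split=> // le_sb.
by have := le_sb _ (wf_marsify wfD); rewrite leqNgt lt_marsify.
Qed.
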